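(* Let $p \in (0,\frac{1}{2})$, let $S=\{1,\dots,n\}$ and let $x,y \in S$ with $x<y$. Let $A$ be any (possibly randomized) algorithm. On a random instance, the probability that $A$ returns a permutation in which $x$ and $y$ appear in the wrong relative order is at least $\frac{1}{2}\left(\frac{p}{1-p}\right)^{2(y-x)-1}$.
   Context: A random instance consists of an input permutation of $S$ chosen uniformly at random together with comparison outcomes: for each pair $i<j$ independently, the comparison reports the wrong order with probability exactly $p$ and the correct order otherwise; outcomes are persistent (repeated comparisons of the same pair always return the same outcome). The algorithm accesses elements only via these comparisons and outputs a permutation of $S$. *)

From mathcomp Require Import all_boot all_order all_algebra all_fingroup.
Set Implicit Arguments. Unset Strict Implicit. Unset Printing Implicit Defensive.
Import Order.TTheory GRing.Theory Num.Theory.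
Local Open Scope ring_scope.

(* Elements of S = {1..n} are represented by 'I_n = {0..n-1} (shift by 1);
   the true order is the order of the ordinals. *)

(* Comparison errors: e (a,b) for a < b says the comparison of elements a and b
   reports the wrong order.  Only entries with a < b are meaningful; the others
   are required to be false, so that summing over valid e sums over the
   independent choices for each pair a < b. *)
Definition errvec (n : nat) := {ffun 'I_n * 'I_n -> bool}.

Definition valid_err (n : nat) (e : errvec n) : bool :=
  [forall a : 'I_n, forall b : 'I_n, ~~ (a < b)%N ==> ~~ e (a, b)].

Definition err_weight (R : numDomainType) (n : nat) (p : R) (e : errvec n) : R :=
  \prod_(ab : 'I_n * 'I_n | (ab.1 < ab.2)%N) (if e ab then p else 1 - p).

(* Comparison outcomes as seen by the algorithm, on input positions.
   The input permutation pi puts element pi i at position i.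
   observed pi e (i,j) = "the comparison says the element at position i is
   smaller than the element at position j". Outcomes are persistent. *)
Definition observed (n : nat) (pi : {perm 'I_n}) (e : errvec n)
  : {ffun 'I_n * 'I_n -> bool} :=
  [ffun ij : 'I_n * 'I_n =>
     let a := pi ij.1 in let b := pi ij.2 in
     if (a < b)%N then ~~ e (a, b)
     else if (b < a)%N then e (b, a) else false].

(* A (possibly randomized) algorithm: since it accesses elements only through
   comparisons and there is no restriction on the number of queries, it is
   exactly a map from the comparison table (on positions) to a probability
   distribution over outputs.  An output s : {perm 'I_n} is an ordering of the
   input positions: s k is the position of the element ranked k-th. *)
Definition algorithm (R : numDomainType) (n : nat) :=
  {ffun {ffun 'I_n * 'I_n -> bool} -> {ffun {perm 'I_n} -> R}}.

Definition is_random_alg (R : numDomainType) (n : nat) (A : algorithm R n) : Prop :=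
  forall t, (forall s, 0 <= A t s) /\ \sum_(s : {perm 'I_n}) A t s = 1.

(* Output s puts elements x and y in the wrong relative order (y before x),
   where the rank of element z is s^-1 (pi^-1 z). *)
Definition wrong_order (n : nat) (pi s : {perm 'I_n}) (x y : 'I_n) : bool :=
  ((s^-1)%g ((pi^-1)%g y) < (s^-1)%g ((pi^-1)%g x))%N.

Definition err_prob (R : numDomainType) (n : nat) (p : R) (A : algorithm R n)
  (x y : 'I_n) : R :=
  \sum_(pi : {perm 'I_n}) \sum_(e : errvec n | valid_err e) \sum_(s : {perm 'I_n})
     (n`!%:R)^-1 * err_weight p e * A (observed pi e) s * (wrong_order pi s x y)%:R.

(* Exchange the elements x and y in the input permutation and transport the
   error pattern along the exchange, flipping the error bit of every pair whose
   true order the exchange reverses.  Every comparison then returns the same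
   outcome, so the algorithm behaves identically on both instances, whereas x
   and y appear in opposite relative orders in its output.  The exchange
   reverses at most 2(y-x)-1 pairs, so the transported error pattern has at
   least q = (p/(1-p))^(2(y-x)-1) times the weight of the original one.  Hence
   the error probability P satisfies q (1 - P) <= P, i.e. P >= q/(1+q) >= q/2. *)

From mathcomp Require Import all_boot all_order all_algebra all_fingroup.
From mathcomp Require Import zify lra ring.
Set Implicit Arguments. Unset Strict Implicit. Unset Printing Implicit Defensive.
Import Order.TTheory GRing.Theory Num.Theory.
Local Open Scope ring_scope.

Section SwapErrors.

Variables (n : nat) (x y : 'I_n).
Local Notation t := (tperm x y).

Lemma tperm_val_neq (c d : 'I_n) : c != d -> (t c : nat) != t d.
Proof. by apply: contra => /eqP/val_inj/perm_inj ->. Qed.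

Definition swap_err (e : errvec n) : errvec n :=
  [ffun cd : 'I_n * 'I_n => (cd.1 < cd.2)%N &&
    (if (t cd.1 < t cd.2)%N then e (t cd.1, t cd.2) else ~~ e (t cd.2, t cd.1))].

Lemma swap_err_valid e : valid_err (swap_err e).
Proof.
apply/forallP => a; apply/forallP => b; apply/implyP => /negbTE nab.
by rewrite ffunE /= nab.
Qed.

Lemma swap_errK e : valid_err e -> swap_err (swap_err e) = e.
Proof.
move=> /forallP ve; apply/ffunP => -[c d]; rewrite !ffunE /= !tpermK.
case: (ltnP c d) => [cd | dc] /=; last first.
  by move: (forallP (ve c) d); rewrite -leqNgt dc => /implyP/(_ isT)/negbTE.
have cnd : c != d by rewrite neq_ltn cd.
have := tperm_val_neq cnd; case: ltngtP => //= _ _.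
by rewrite ltnNge (ltnW cd) negbK.
Qed.

Lemma observed_swap (pi : {perm 'I_n}) e :
  observed (pi * t)%g (swap_err e) = observed pi e.
Proof.
apply/ffunP => -[i j]; rewrite !ffunE /= !permM !ffunE /= !tpermK.
case: (ltngtP (pi i) (pi j)) => ab; last by rewrite (val_inj ab) ltnn.
all: have abn : pi i != pi j by rewrite neq_ltn ab ?orbT.
all: have := tperm_val_neq abn; by case: ltngtP => //= _ _; rewrite ?ab ?negbK.
Qed.

Lemma wrong_order_swap (pi s : {perm 'I_n}) : x != y ->
  wrong_order (pi * t) s x y = ~~ wrong_order pi s x y.
Proof.
move=> xy; rewrite /wrong_order invgM tpermV !permM tpermR tpermL.
by rewrite ltnNge leq_eqVlt val_eqE !(inj_eq perm_inj) eq_sym (negbTE xy).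
Qed.

Definition swap_pair (cd : 'I_n * 'I_n) : 'I_n * 'I_n :=
  if (t cd.1 < t cd.2)%N == (cd.1 < cd.2)%N
  then (t cd.1, t cd.2) else (t cd.2, t cd.1).

Lemma swap_pairK : involutive swap_pair.
Proof.
move=> [c d]; rewrite /swap_pair /=.
have [<-|cd] := eqVneq c d; first by rewrite !ltnn /= !tpermK.
have := tperm_val_neq cd; have : (c : nat) != d by [].
case: (ltngtP c d) => // lt_cd _; case: (ltngtP (t c) (t d)) => //= lt_t _.
all: rewrite ?lt_cd ?lt_t /= !tpermK ?lt_cd ?lt_t //.
all: by rewrite !ltnNge ?(ltnW lt_cd) ?(ltnW lt_t).
Qed.

Lemma swap_pair_lt cd :
  ((swap_pair cd).1 < (swap_pair cd).2)%N = (cd.1 < cd.2)%N.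
Proof.
case: cd => c d; rewrite /swap_pair /=.
have [<-|cd] := eqVneq c d; first by case: ifP; rewrite /= !ltnn.
have := tperm_val_neq cd; have : (c : nat) != d by [].
case: (ltngtP c d) => // lt_cd _; case: (ltngtP (t c) (t d)) => //= lt_t _.
all: by rewrite ?lt_cd ?lt_t /= ltnNge ltnW.
Qed.

Lemma swap_err_pair e (c d : 'I_n) : (c < d)%N ->
  swap_err e (c, d) = e (swap_pair (c, d)) (+) (t d < t c)%N.
Proof.
move=> lt_cd; rewrite ffunE /swap_pair /= lt_cd.
have cd : c != d by rewrite neq_ltn lt_cd.
have := tperm_val_neq cd.
by case: ltngtP => //= _ _; rewrite ?addbF ?addbT.
Qed.

Hypothesis lt_xy : (x < y)%N.

Lemma tperm_inversion (c d : 'I_n) : (c < d)%N -> (t d < t c)%N ->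
  c = x /\ (x < d <= y)%N \/ d = y /\ (x < c < y)%N.
Proof.
have val_neq (a b : 'I_n) : a <> b -> (a : nat) <> b by move=> ab /val_inj.
case: tpermP => [->|->|/val_neq cx /val_neq cy];
  case: tpermP => [->|->|/val_neq dx /val_neq dy] //= lt_cd lt_t.
all: first [by left; split=> //; lia | by right; split=> //; lia | exfalso; lia].
Qed.

Lemma tperm_inversions_le :
  (\sum_(cd : 'I_n * 'I_n | (cd.1 < cd.2)%N) (t cd.2 < t cd.1)%N
     <= 2 * (y - x) - 1)%N.
Proof.
rewrite (eq_bigr (fun cd => if (t cd.2 < t cd.1)%N then 1 else 0)%N);
  last by move=> cd _; case: ltnP.
rewrite -big_mkcondr sum1dep_card.
pose right_of_x (k : 'I_(y - x)) := (x, insubd x (x + k.+1)%N).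
pose left_of_y (k : 'I_(y - x - 1)) := (insubd x (x + k.+1)%N, y).
apply: (@leq_trans #|[set right_of_x k | k in 'I_(y - x)]
                     :|: [set left_of_y k | k in 'I_(y - x - 1)]|).
  apply/subset_leq_card/subsetP => -[c d]; rewrite !inE /=.
  case/andP=> lt_cd /(tperm_inversion lt_cd) [[-> le_xdy] | [-> lt_xcy]].
  - have k_lt : (d - x - 1 < y - x)%N by lia.
    apply/orP; left; apply/imsetP; exists (Ordinal k_lt) => //=.
    rewrite /right_of_x /=; have -> : (x + (d - x - 1).+1 = d)%N by lia.
    by rewrite valKd.
  - have k_lt : (c - x - 1 < y - x - 1)%N by lia.
    apply/orP; right; apply/imsetP; exists (Ordinal k_lt) => //=.
    rewrite /left_of_y /=; have -> : (x + (c - x - 1).+1 = c)%N by lia.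
    by rewrite valKd.
apply: leq_trans (leq_card_setU _ _) _.
apply: leq_trans (leq_add (leq_imset_card _ _) (leq_imset_card _ _)) _.
by rewrite !card_ord; lia.
Qed.

Lemma err_weight_swap (R : realFieldType) (p : R) e :
  0 <= p -> p <= 1 / 2 ->
  (p / (1 - p)) ^+ (2 * (y - x) - 1) * err_weight p e <= err_weight p (swap_err e).
Proof.
move=> p_ge0 p_le; set r := p / (1 - p).
pose f (b : bool) := if b then p else 1 - p.
have f_ge0 b : 0 <= f b by case: b; rewrite /f; lra.
have r_ge0 : 0 <= r by rewrite divr_ge0 //; lra.
have f_flip b : r * f b <= f (~~ b).
  have rq : r * (1 - p) = p by rewrite mulfVK //; apply: lt0r_neq0; lra.
  case: b; rewrite /f /= ?rq //.
  by apply: le_trans (_ : p <= 1 - p); [rewrite ler_piMl // ler_pdivrMr|]; lra.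
have -> : err_weight p e =
    \prod_(cd : 'I_n * 'I_n | (cd.1 < cd.2)%N) f (e (swap_pair cd)).
  rewrite /err_weight (reindex_inj (can_inj swap_pairK)) /=.
  by apply: eq_bigl => cd; rewrite swap_pair_lt.
apply: le_trans (_ : r ^+ (\sum_(cd : 'I_n * 'I_n | (cd.1 < cd.2)%N)
                             (t cd.2 < t cd.1)%N) * _ <= _).
  apply: ler_wpM2r; first exact: prodr_ge0.
  apply: ler_wiXn2l tperm_inversions_le => //.
  by rewrite ler_pdivrMr; lra.
rewrite -prodrXr -big_split /=; apply: ler_prod => -[c d] /= lt_cd.
rewrite swap_err_pair // mulr_ge0 ?exprn_ge0 //=.
by case: (t d < t c)%N; rewrite ?expr0 ?mul1r ?addbF ?addbT ?lexx ?f_flip.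
Qed.

End SwapErrors.

Lemma err_weight_sum1 (R : numDomainType) n (p : R) :
  \sum_(e : errvec n | valid_err e) err_weight p e = 1.
Proof.
pose F (ab : 'I_n * 'I_n) (b : bool) : R :=
  if (ab.1 < ab.2)%N then (if b then p else 1 - p) else (if b then 0 else 1).
have F_sum1 : \prod_(ab : 'I_n * 'I_n) \sum_(b : bool) F ab b = 1.
  apply: big1 => ab _; rewrite big_bool /F.
  by case: ifP => _ /=; rewrite ?add0r // addrC subrK.
rewrite -[RHS]F_sum1 bigA_distr_bigA /= [LHS]big_mkcond /=.
apply: eq_bigr => e _; case: ifP => e_valid; apply/esym.
- rewrite /err_weight [RHS]big_mkcond /=; apply: eq_bigr => -[a b] _; rewrite /F /=.
  case: ltnP => // le_ba.
  by move: (forallP (forallP e_valid a) b); rewrite -leqNgt le_ba => /negbTE ->.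
- move/negbT: e_valid => /forallPn [a] /forallPn [b].
  rewrite negb_imply negbK => /andP [nlt_ab e_ab].
  by rewrite (bigD1 (a, b)) //= /F /= (negbTE nlt_ab) e_ab mul0r.
Qed.

Lemma uniform_weight_sum1 (R : numFieldType) n (p : R) :
  \sum_(pi : {perm 'I_n}) \sum_(e : errvec n | valid_err e)
    (n`!%:R)^-1 * err_weight p e = 1.
Proof.
under eq_bigr do rewrite -mulr_sumr err_weight_sum1 mulr1.
rewrite sumr_const card_Sn -[_^-1 *+ _]mulr_natr mulVf //.
by rewrite pnatr_eq0 -lt0n fact_gt0.
Qed.

Section ErrorProbability.

Variables (R : realFieldType) (n : nat) (p : R) (A : algorithm R n) (x y : 'I_n).
Hypothesis A_random : is_random_alg A.

Definition wrong_prob (pi : {perm 'I_n}) (e : errvec n) : R :=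
  \sum_(s : {perm 'I_n}) A (observed pi e) s * (wrong_order pi s x y)%:R.

Lemma wrong_prob_le1 pi e : wrong_prob pi e <= 1.
Proof.
have [A_ge0 <-] := A_random (observed pi e).
apply: ler_sum => s _; rewrite -[leRHS]mulr1 ler_wpM2l //.
by case: wrong_order.
Qed.

Lemma wrong_prob_swap pi e : x != y ->
  wrong_prob (pi * tperm x y) (swap_err x y e) = 1 - wrong_prob pi e.
Proof.
move=> xy; have [_ <-] := A_random (observed pi e).
rewrite /wrong_prob observed_swap -sumrB; apply: eq_bigr => s _.
by rewrite wrong_order_swap //; case: wrong_order; rewrite ?mulr1 ?mulr0 ?subrr ?subr0.
Qed.

Lemma err_probE : err_prob p A x y =
  \sum_(pi : {perm 'I_n}) \sum_(e : errvec n | valid_err e)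
    (n`!%:R)^-1 * err_weight p e * wrong_prob pi e.
Proof.
apply: eq_bigr => pi _; apply: eq_bigr => e _.
by rewrite /wrong_prob mulr_sumr; apply: eq_bigr => s _; rewrite !mulrA.
Qed.

Lemma err_prob_swapE : x != y -> err_prob p A x y =
  \sum_(pi : {perm 'I_n}) \sum_(e : errvec n | valid_err e)
    (n`!%:R)^-1 * err_weight p (swap_err x y e) * (1 - wrong_prob pi e).
Proof.
move=> xy; rewrite err_probE (reindex_inj (mulIg (tperm x y))) /=.
apply: eq_bigr => pi _; rewrite (reindex_onto (swap_err x y) (swap_err x y)) /=.
  apply: congr_big => // e; last by rewrite wrong_prob_swap.
  rewrite swap_err_valid /=.
  by apply/eqP/idP => [<- | /swap_errK //]; exact: swap_err_valid.
by move=> e /swap_errK.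
Qed.

Lemma err_prob_compl_le : 0 <= p -> p <= 1 / 2 -> (x < y)%N ->
  (p / (1 - p)) ^+ (2 * (y - x) - 1) * (1 - err_prob p A x y) <= err_prob p A x y.
Proof.
move=> p_ge0 p_le xy; have x_neq_y : x != y by rewrite neq_ltn xy.
set q := _ ^+ _.
rewrite {2}(err_prob_swapE x_neq_y) -[X in q * (X - _)](uniform_weight_sum1 n p).
rewrite err_probE -sumrB mulr_sumr; apply: ler_sum => pi _.
rewrite -sumrB mulr_sumr; apply: ler_sum => e _.
have -> : q * (n`!%:R^-1 * err_weight p e
                - n`!%:R^-1 * err_weight p e * wrong_prob pi e)
  = n`!%:R^-1 * (q * err_weight p e) * (1 - wrong_prob pi e) by ring.
rewrite ler_wpM2r ?subr_ge0 ?wrong_prob_le1 // ler_wpM2l ?invr_ge0 ?ler0n //.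
exact: err_weight_swap.
Qed.

End ErrorProbability.

Lemma half_le_of_compl_le (R : realFieldType) (q P : R) :
  0 <= q <= 1 -> q * (1 - P) <= P -> 1 / 2 * q <= P.
Proof. by case/andP=> q_ge0 q_le1 le_P; nra. Qed.

Theorem lemma6p1 (R : realFieldType) (n : nat) (p : R) (x y : 'I_n)
  (A : algorithm R n) :
  0 < p -> p < 1 / 2 -> (x < y)%N -> is_random_alg A ->
  1 / 2 * (p / (1 - p)) ^+ (2 * (y - x) - 1) <= err_prob p A x y.
Proof.
move=> p_gt0 p_lt xy A_random.
apply: half_le_of_compl_le; last by apply: err_prob_compl_le; rewrite ?ltW.
rewrite exprn_ge0 ?exprn_ile1 ?divr_ge0 ?ler_pdivrMr //; lra.
Qed.
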